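(* Let $\mathcal{C}$ be a clone on a finite set $A=\{1,\dots,t\}$ and let $(c,d)\in A^2$. Then $\lambda(\mathcal{C},(c,d))$ is an upward closed subset of $(A^+,\le_{\mathrm{E}})$, i.e. if $\mathbf{a}\in\lambda(\mathcal{C},(c,d))$ and $\mathbf{a}\le_{\mathrm{E}}\mathbf{b}$ then $\mathbf{b}\in\lambda(\mathcal{C},(c,d))$.
   Context: A clone on $A$ is a set of finitary operations on $A$ closed under composition and containing all projections; $\mathcal{C}^{[n]}$ is its set of $n$-ary members. $A^+=\bigcup_{n\ge1}A^n$. $<_{\mathrm{lex}}$ is the strict lexicographic order on $A^n$ induced by $1<\dots<t$. For $\mathbf{a}\in A^n$, $\varphi(\mathcal{C},\mathbf{a}):=\{(f(\mathbf{a}),g(\mathbf{a})) : f,g\in\mathcal{C}^{[n]},\ f(\mathbf{c})=g(\mathbf{c})\text{ for all }\mathbf{c}<_{\mathrm{lex}}\mathbf{a}\}$, and $\lambda(\mathcal{C},(c,d)):=\{\mathbf{a}\in A^+ : (c,d)\notin\varphi(\mathcal{C},\mathbf{a})\}$. $\mathrm{firstOcc}(\mathbf{a},b)$ is $0$ if $b$ does not occur in $\mathbf{a}$, otherwise the least $i$ with $a_i=b$; $(a_1,\dots,a_m)\le_{\mathrm{E}}(b_1,\dots,b_n)$ means there is a strictly increasing $h:\{1,\dots,m\}\to\{1,\dots,n\}$ with $a_i=b_{h(i)}$ for all $i$, $\{a_1,\dots,a_m\}=\{b_1,\dots,b_n\}$, and $h(\mathrm{firstOcc}(\mathbf{a},c))=\mathrm{firstOcc}(\mathbf{b},c)$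 for all $c\in\{a_1,\dots,a_m\}$. *)

(* A = {1,...,t} is modelled as 'I_t = {0,...,t-1}
   with its natural order (order-isomorphic via k |-> k+1). *)
From mathcomp Require Import all_boot.
Set Implicit Arguments. Unset Strict Implicit. Unset Printing Implicit Defensive.

(* n-ary operations on 'I_t, as finite functions (extensional = Leibniz). *)
Definition op (t n : nat) := {ffun n.-tuple 'I_t -> 'I_t}.

Definition opfam (t : nat) := forall n : nat, op t n -> Prop.

Definition proj_op (t n : nat) (i : 'I_n) : op t n := [ffun x => tnth x i].

Definition comp_op (t n m : nat) (f : op t n) (gs : n.-tuple (op t m)) : op t m :=
  [ffun x => f [tuple tnth gs i x | i < n]].

Definition is_clone (t : nat) (C : opfam t) : Prop :=
  (forall n (i : 'I_n), C n (proj_op t i)) /\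
  (forall n m (f : op t n) (gs : n.-tuple (op t m)),
      0 < n -> 0 < m -> C n f -> (forall i : 'I_n, C m (tnth gs i)) ->
      C m (comp_op f gs)).

Definition ltlex (t n : nat) (c a : n.-tuple 'I_t) : Prop :=
  exists i : 'I_n,
    (forall j : 'I_n, (j < i)%N -> tnth c j = tnth a j) /\ (tnth c i < tnth a i)%N.

Definition phi (t : nat) (C : opfam t) (n : nat) (a : n.-tuple 'I_t)
    (p : 'I_t * 'I_t) : Prop :=
  exists (f g : op t n), C n f /\ C n g /\
    (forall c : n.-tuple 'I_t, ltlex c a -> f c = g c) /\
    p = (f a, g a).

(* lambda(C, (c,d)) as a predicate on A^+ = nonempty sequences over 'I_t *)
Definition lam (t : nat) (C : opfam t) (cd : 'I_t * 'I_t) (a : seq 'I_t) : Prop :=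
  (0 < size a)%N /\ ~ phi C (in_tuple a) cd.

(* a <=_E b, with 0-based indices: firstOcc(a,c) - 1 = index c a for c in a. *)
Definition leE (t : nat) (a b : seq 'I_t) : Prop :=
  exists h : nat -> nat,
    (forall i, (i < size a)%N -> (h i < size b)%N) /\
    (forall i j, (i < j)%N -> (j < size a)%N -> (h i < h j)%N) /\
    (forall x0 i, (i < size a)%N -> nth x0 a i = nth x0 b (h i)) /\
    a =i b /\
    (forall c, c \in a -> h (index c a) = index c b).

(* If a <=_E b, every position j of b can be traced back to a position s(j) of
   a carrying the same letter: the preimage under the embedding h when j lies
   in its range, and the first occurrence of b_j in a otherwise.  The map s
   inverts h and sends positions before h(i) to positions before i, so any
   x <lex a is sent to x o s <lex a o s = b.  Hence precomposing with the
   projections along s, which stays inside the clone, turns every witness of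
   (c,d) in phi(C,b) into one in phi(C,a): phi(C,b) is contained in phi(C,a). *)

From mathcomp Require Import all_boot.

Set Implicit Arguments.
Unset Strict Implicit.
Unset Printing Implicit Defensive.

Definition tuple_minor (T : Type) (n m : nat) (s : 'I_m -> 'I_n)
    (x : n.-tuple T) : m.-tuple T :=
  [tuple tnth x (s j) | j < m].

Definition minor_op (t n m : nat) (s : 'I_m -> 'I_n) (f : op t m) : op t n :=
  comp_op f [tuple proj_op t (s j) | j < m].

Lemma minor_opE (t n m : nat) (s : 'I_m -> 'I_n) (f : op t m)
    (x : n.-tuple 'I_t) :
  minor_op s f x = f (tuple_minor s x).
Proof.
rewrite ffunE; congr (f _); apply: eq_from_tnth => j.
by rewrite !tnth_mktuple ffunE.
Qed.

Lemma clone_minor_op (t : nat) (C : opfam t) (n m : nat)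
    (s : 'I_m -> 'I_n) (f : op t m) :
  is_clone C -> (0 < n)%N -> (0 < m)%N -> C m f -> C n (minor_op s f).
Proof.
move=> [Cproj Ccomp] n_gt0 m_gt0 Cf; apply: Ccomp => // j.
by rewrite tnth_mktuple; apply: Cproj.
Qed.

Section LexMinor.

Variables (n m : nat) (s : 'I_m -> 'I_n) (h : 'I_n -> 'I_m).
Hypothesis sK : cancel h s.
Hypothesis s_lt : forall (i : 'I_n) (j : 'I_m), (j < h i)%N -> (s j < i)%N.

Lemma ltlex_minor (t : nat) (x a : n.-tuple 'I_t) :
  ltlex x a -> ltlex (tuple_minor s x) (tuple_minor s a).
Proof.
case=> i [eq_before lt_i]; exists (h i); split; last by rewrite !tnth_mktuple sK.
by move=> j lt_j; rewrite !tnth_mktuple eq_before // s_lt.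
Qed.

Lemma phi_minor (t : nat) (C : opfam t) (a : n.-tuple 'I_t) (p : 'I_t * 'I_t) :
  is_clone C -> (0 < n)%N -> (0 < m)%N ->
  phi C (tuple_minor s a) p -> phi C a p.
Proof.
move=> clC n_gt0 m_gt0 [f [g [Cf [Cg [eq_fg ->]]]]].
exists (minor_op s f), (minor_op s g).
split; first exact: clone_minor_op.
split; first exact: clone_minor_op.
by split=> [x lt_xa|]; rewrite !minor_opE // eq_fg //; apply: ltlex_minor.
Qed.

End LexMinor.

Lemma leE_minor (t : nat) (a b : seq 'I_t) :
  leE a b ->
  exists (s : 'I_(size b) -> 'I_(size a)) (h : 'I_(size a) -> 'I_(size b)),
    [/\ cancel h s, forall i (j : 'I_(size b)), (j < h i)%N -> (s j < i)%N
      & tuple_minor s (in_tuple a) = in_tuple b].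
Proof.
move=> [h0 [h0_lt [h0_inc [nth_ab [eq_ab index_ab]]]]].
have h0_le : {in gtn (size a) &, {mono h0 : i j / (i <= j)%N}}.
  by apply: leq_mono_in => i j _ aj lt_ij; apply: h0_inc.
have h0_mono := leqW_mono_in h0_le.
pose h (i : 'I_(size a)) := Ordinal (h0_lt i (ltn_ord i)).
have b_in_a (j : 'I_(size b)) : (index (tnth (in_tuple b) j) a < size a)%N.
  by rewrite index_mem eq_ab mem_tnth.
pose s j := if [pick i | h i == j] is Some i then i else Ordinal (b_in_a j).
have h_inj : injective h.
  move=> i k /(congr1 val) /= eq_h; apply/val_inj/eqP.
  by rewrite eqn_leq -(h0_le i k) -?(h0_le k i) ?inE // eq_h leqnn.
have sK : cancel h s.
  by move=> i; rewrite /s; case: pickP => [k /eqP/h_inj // | /(_ i)]; rewrite eqxx.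
exists s, h; split=> //.
- move=> i j; rewrite /s; case: pickP => [k /eqP <-|_] lt_j.
    by rewrite -(h0_mono k i) ?inE.
  (* h (index b_j a) = index b_j b <= j < h i *)
  rewrite -(h0_mono _ i) ?inE //= index_ab; last by rewrite eq_ab mem_tnth.
  exact: leq_ltn_trans (index_nth _ (ltn_ord j)) lt_j.
- apply: eq_from_tnth => j; have x0 := tnth (in_tuple b) j.
  rewrite tnth_mktuple !(tnth_nth x0) /s; case: pickP => [i /eqP <-|_].
    exact: nth_ab.
  by rewrite /= nth_index ?eq_ab ?mem_tnth ?(tnth_nth x0).
Qed.

Theorem lemma5p2 (t : nat) (C : opfam t) (cd : 'I_t * 'I_t) :
  is_clone C ->
  forall a b : seq 'I_t, lam C cd a -> leE a b -> lam C cd b.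
Proof.
move=> clC a b [a_gt0 not_phi_a] le_ab.
have b_gt0 : (0 < size b)%N.
  by case: le_ab => h [h_lt _]; exact: leq_ltn_trans (h_lt 0 a_gt0).
have [s [h [sK s_lt ab]]] := leE_minor le_ab.
split=> // phi_b; apply: not_phi_a; apply: (phi_minor sK s_lt) => //.
by rewrite ab.
Qed.
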